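(* Let $a>0$ be a constant and consider the (3+1)-dimensional Zakharov–Kuznetsov equation $$u_t + a\,u\,u_x + u_{xx} + u_{yy} + u_{zz} = 0$$ for $u=u(x,y,z,t)$. The infinitesimal generators $\xi_x\partial_x+\xi_y\partial_y+\xi_z\partial_z+\xi_t\partial_t+\xi_u\partial_u$ of the one-parameter Lie groups of point transformations $(x,y,z,t,u)\mapsto(\hat x,\hat y,\hat z,\hat t,\hat u)$ leaving this equation invariant are exactly those with $$\xi_x=\tfrac{c_1x}{2}+c_5t+c_6,\quad \xi_y=\tfrac{c_1y}{2}+c_3z+c_4,\quad \xi_z=-c_3y+\tfrac{c_1z}{2}+c_7,\quad \xi_t=c_1t+c_2,\quad \xi_u=-\tfrac{c_1u}{2}+\tfrac{c_5}{a},$$ where $c_1,\dots,c_7$ are arbitrary real constants. Equivalently, the Lie algebra of point symmetries is spanned by $\mathfrak{D}_1=\frac{x}{2}\partial_x+\frac{y}{2}\partial_y+\frac{z}{2}\partial_z+t\partial_t-\frac{u}{2}\partial_u$, $\mathfrak{D}_2=\partial_t$, $\mathfrak{D}_3=z\partial_y-y\partial_z$, $\mathfrak{D}_4=\partial_y$, $\mathfrak{D}_5=t\partial_x+\frac{1}{a}\partial_u$, $\mathfrak{D}_6=\partial_x$, $\mathfrak{D}_7=\partial_z$.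
   Context: A vector field $\mathbb{Z}$ on the space of variables $(x,y,z,t,u)$ is an infinitesimal (point) symmetry of the equation $\Delta:=u_t+auu_x+u_{xx}+u_{yy}+u_{zz}=0$ if its second prolongation $\mathrm{Pr}^{(2)}\mathbb{Z}$ satisfies $\mathrm{Pr}^{(2)}\mathbb{Z}(\Delta)=0$ whenever $\Delta=0$. *)

From HB Require Import structures.
From mathcomp Require Import all_boot all_order all_algebra.
From mathcomp Require Import all_classical all_reals all_analysis.
Set Implicit Arguments. Unset Strict Implicit. Unset Printing Implicit Defensive.
Import Order.TTheory GRing.Theory Num.Theory.
Import numFieldNormedType.Exports.
Local Open Scope ring_scope.

Section ZK.
Variable R : realType.

(* the space of variables (x,y,z,t,u); coordinates 0,1,2,3,4 *)
Definition V5 := 'rV[R]_5.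
Definition ev (k : 'I_5) : V5 := delta_mx 0 k.
Definition pt (x y z t u : R) : V5 := \row_(k < 5) nth 0 [:: x; y; z; t; u] k.

Definition pd (k : 'I_5) (f : V5 -> R) : V5 -> R := fun p => 'D_(ev k) f p.

Fixpoint Cn (n : nat) (f : V5 -> R) : Prop :=
  match n with
  | 0 => continuous f
  | n'.+1 => continuous f /\ (forall k p, derivable f p (ev k)) /\
             (forall k, Cn n' (pd k f))
  end.
Definition smooth (f : V5 -> R) : Prop := forall n, Cn n f.

(* independent variables x,y,z,t are indexed by 'I_4; u is coordinate 4 *)
Definition iv (i : 'I_4) : 'I_5 := widen_ord (leqnSn 4) i.
Definition uu : 'I_5 := ord_max.
Definition ix : 'I_4 := @Ordinal 4 0 isT.
Definition iy : 'I_4 := @Ordinal 4 1 isT.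
Definition iz : 'I_4 := @Ordinal 4 2 isT.
Definition it : 'I_4 := @Ordinal 4 3 isT.

(* Second-order jet coordinates: a base point p, first derivatives u1 i = u_i,
   second derivatives u2 i j = u_ij (symmetric). *)

Definition TD1 (F : V5 -> R) (u1 : 'I_4 -> R) (i : 'I_4) (p : V5) : R :=
  pd (iv i) F p + u1 i * pd uu F p.
Definition TD2 (F : V5 -> R) (u1 : 'I_4 -> R) (u2 : 'I_4 -> 'I_4 -> R)
    (i j : 'I_4) (p : V5) : R :=
  pd (iv i) (pd (iv j) F) p + u1 i * pd uu (pd (iv j) F) p
  + u1 j * pd (iv i) (pd uu F) p + u1 i * u1 j * pd uu (pd uu F) p
  + u2 i j * pd uu F p.

(* coefficients of the second prolongation of
   Z = sum_i xi_i d_{x^i} + phi d_u :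
   phi^i  = D_i phi - sum_k u_k D_i xi_k
   phi^ji = D_i phi^j - sum_k u_jk D_i xi_k  (written out)               *)
Definition pr1 (xi : 'I_4 -> V5 -> R) (phi : V5 -> R) (u1 : 'I_4 -> R)
    (i : 'I_4) (p : V5) : R :=
  TD1 phi u1 i p - \sum_(k < 4) u1 k * TD1 (xi k) u1 i p.
Definition pr2 (xi : 'I_4 -> V5 -> R) (phi : V5 -> R) (u1 : 'I_4 -> R)
    (u2 : 'I_4 -> 'I_4 -> R) (i j : 'I_4) (p : V5) : R :=
  TD2 phi u1 u2 i j p
  - \sum_(k < 4) (u1 k * TD2 (xi k) u1 u2 i j p + u2 i k * TD1 (xi k) u1 j p
                  + u2 j k * TD1 (xi k) u1 i p).

Definition zk (a : R) (p : V5) (u1 : 'I_4 -> R) (u2 : 'I_4 -> 'I_4 -> R) : R :=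
  u1 it + a * p 0 uu * u1 ix + u2 ix ix + u2 iy iy + u2 iz iz.

(* Pr^(2) Z (Delta), written out: Delta depends on u, u_t, u_x, u_xx, u_yy, u_zz *)
Definition prZK (a : R) (xi : 'I_4 -> V5 -> R) (phi : V5 -> R) (p : V5)
    (u1 : 'I_4 -> R) (u2 : 'I_4 -> 'I_4 -> R) : R :=
  pr1 xi phi u1 it p + a * phi p * u1 ix + a * p 0 uu * pr1 xi phi u1 ix p
  + pr2 xi phi u1 u2 ix ix p + pr2 xi phi u1 u2 iy iy p + pr2 xi phi u1 u2 iz iz p.

Definition is_symmetry (a : R) (xi : 'I_4 -> V5 -> R) (phi : V5 -> R) : Prop :=
  forall (p : V5) (u1 : 'I_4 -> R) (u2 : 'I_4 -> 'I_4 -> R),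
    (forall i j, u2 i j = u2 j i) ->
    zk a p u1 u2 = 0 -> prZK a xi phi p u1 u2 = 0.

End ZK.

From HB Require Import structures.
From mathcomp Require Import all_boot all_order all_algebra.
From mathcomp Require Import all_classical all_reals all_analysis.
From mathcomp Require Import ring lra.
Set Implicit Arguments. Unset Strict Implicit. Unset Printing Implicit Defensive.
Import Order.TTheory GRing.Theory Num.Theory.
Import numFieldNormedType.Exports.
Local Open Scope classical_set_scope.
Local Open Scope ring_scope.

(* On the shell [zk = 0], where [u_t] is eliminated, [prZK] is a polynomial
   in the remaining jet coordinates, so all its coefficients vanish.  These
   determining equations say that [xi_t] depends on [t] only, that the [xi]'s
   do not depend on [u], that [(xi_x, xi_y, xi_z)] is infinitesimally
   conformal in space with [d_t xi_t = 2 d_x xi_x = 2 d_y xi_y = 2 d_z xi_z],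
   and, through the term [a u u_x], that [d_x xi_y = d_x xi_z = 0] and that
   [phi] is affine in [u] with slope [- d_t xi_t / 2].  With Schwarz's theorem
   for the smooth coefficients, every first derivative of the [xi]'s turns out
   to be constant, which gives the stated affine fields.  Conversely, for
   these fields [prZK] is [- 3 c1 / 2] times [zk]. *)

Lemma eq_derive_diffquot (R : numFieldType) (U W : normedModType R)
    (f : U -> R) (g : W -> R) (p v : U) (q w : W) :
  (forall h : R, f (h *: v + p) - f p = g (h *: w + q) - g q) ->
  'D_v f p = 'D_w g q /\ (derivable f p v <-> derivable g q w).
Proof.
move=> fg.
have quotE : (fun h : R => h^-1 *: ((f \o shift p) (h *: v) - f p)) =
              (fun h : R => h^-1 *: ((g \o shift q) (h *: w) - g q)).
  by apply: funext => h /=; rewrite fg.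
by rewrite /derive /derivable quotE.
Qed.

Section DirectionalDerivatives.
Variables (R : realType) (V : normedModType R).
Implicit Types (f g : V -> R) (p q v w : V).

Lemma derive_translate f v c p :
  'D_v (fun q => f (q + c)) p = 'D_v f (p + c) /\
  (derivable (fun q => f (q + c)) p v <-> derivable f (p + c) v).
Proof. by apply: eq_derive_diffquot => h; rewrite addrA. Qed.

Lemma derive_shift f v c (d : R) p :
  (forall q, f (q + c) = f q + d) -> 'D_v f (p + c) = 'D_v f p.
Proof.
move=> fc; suff [] : 'D_v f (p + c) = 'D_v f p /\
                    (derivable f (p + c) v <-> derivable f p v) by [].
by apply: eq_derive_diffquot => h; rewrite addrA !fc; ring.
Qed.

Lemma derive_line_affine f v p (c : R) :
  (forall h : R, f (p + h *: v) = f p + c * h) -> 'D_v f p = c.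
Proof.
move=> fc.
have [-> _] : 'D_v f p = 'D_1 (fun h : R => c * h) 0 /\
              (derivable f p v <-> derivable (fun h : R => c * h) 0 1).
  apply: eq_derive_diffquot => h.
  by rewrite (addrC _ p) fc addr0 mulr0 subr0 [h *: 1]mulr1; ring.
have -> : (fun h : R => c * h) = c *: id by [].
by rewrite deriveZ // derive_id [c *: 1]mulr1.
Qed.

Lemma derive_line_cst f v p :
  (forall h : R, f (p + h *: v) = f p) -> 'D_v f p = 0.
Proof. by move=> fc; apply: derive_line_affine => h; rewrite fc mul0r addr0. Qed.

Lemma derive_eq0 f v p : (forall q, f q = 0) -> 'D_v f p = 0.
Proof. by move=> f0; apply: derive_line_cst => h; rewrite !f0. Qed.

Lemma derive_proportional f g v p (c : R) : derivable g p v ->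
  (forall h : R, f (p + h *: v) - c * g (p + h *: v) = f p - c * g p) ->
  'D_v f p = c * 'D_v g p.
Proof.
move=> dg fg.
suff [-> _] : 'D_v f p = 'D_v (c *: g) p /\
              (derivable f p v <-> derivable (c *: g) p v) by rewrite deriveZ.
apply: eq_derive_diffquot => h /=; rewrite (addrC _ p).
change (f (p + h *: v) - f p = c * g (p + h *: v) - c * g p).
have := fg h; lra.
Qed.

Lemma derive_along_line f v p (s : R) :
  'D_1 (fun s : R => f (p + s *: v)) s = 'D_v f (p + s *: v) /\
  (derivable (fun s : R => f (p + s *: v)) s 1 <-> derivable f (p + s *: v) v).
Proof.
apply: eq_derive_diffquot => h /=.
by rewrite [h *: 1]mulr1 scalerDl addrCA addrA.
Qed.

Lemma line_affine f v p (c : R) :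
  (forall s : R, derivable f (p + s *: v) v) ->
  (forall s : R, 'D_v f (p + s *: v) = c) ->
  forall s : R, f (p + s *: v) = f p + c * s.
Proof.
move=> df fc s.
pose l := fun s : R => f (p + s *: v).
have l'c x : is_derive x (1 : R) (l - c *: id) 0.
  have [l'E dl] := derive_along_line f v p x.
  have : is_derive x 1 l c by rewrite -(fc x) -l'E; apply/derivableP/dl.
  by move=> ?; apply: is_derive_eq; rewrite [c *: 1]mulr1 subrr.
have : l s - c * s = l 0 - c * 0 by exact: is_derive_0_is_cst s 0 l'c.
by rewrite /l scale0r addr0 mulr0 subr0 => <-; ring.
Qed.

Lemma line_mvt f v p (h : R) :
  (forall s : R, derivable f (p + s *: v) v) ->
  exists2 t : R, `|t| <= `|h| & f (p + h *: v) - f p = 'D_v f (p + t *: v) * h.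
Proof.
move=> df; pose l := fun s : R => f (p + s *: v).
have l' x : is_derive x (1 : R) l ('D_v f (p + x *: v)).
  have [l'E dl] := derive_along_line f v p x.
  by rewrite -l'E; apply/derivableP/dl.
have lc x y : {within `[x, y], continuous l}.
  apply/continuous_subspaceT => s; apply/differentiable_continuous/derivable1_diffP.
  exact/(derive_along_line f v p s).2.
have [h0|h0] := leP 0 h.
  have [t] := MVT_segment h0 (fun x _ => l' x) (lc 0 h).
  rewrite in_itv /= /l scale0r addr0 subr0 => /andP[t0 th] fE.
  by exists t; rewrite ?ger0_norm // (le_trans t0 th).
have [t] := MVT_segment (ltW h0) (fun x _ => l' x) (lc h 0).
rewrite in_itv /= /l scale0r addr0 => /andP[ht t0] fE.
by exists t; [rewrite ler0_norm // ltr0_norm //; lra | lra].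
Qed.

Lemma second_difference_mvt f v w p (h : R) :
  (forall q, derivable f q v) -> (forall q, derivable ('D_v f) q w) ->
  exists t1 t2 : R, [/\ `|t1| <= `|h|, `|t2| <= `|h| &
    f (p + h *: v + h *: w) - f (p + h *: w) - f (p + h *: v) + f p
    = 'D_w ('D_v f) (p + t1 *: v + t2 *: w) * h * h].
Proof.
move=> df ddf.
pose g q := f (q + h *: w) - f q.
have g' q : derivable g q v /\ 'D_v g q = 'D_v f (q + h *: w) - 'D_v f q.
  have [E1 [_ dfw]] := derive_translate f v (h *: w) q.
  have dt : derivable (fun q => f (q + h *: w)) q v by apply: dfw.
  have -> : g = (fun q => f (q + h *: w)) - f by [].
  by rewrite deriveB // E1; split => //; apply: derivableB.
have [t1 t1h gE] := line_mvt h (fun s => (g' (p + s *: v)).1).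
have [t2 t2h f'E] := line_mvt h (fun s => ddf (p + t1 *: v + s *: w)).
exists t1, t2; split => //.
by rewrite -f'E -(g' _).2 -gE /g (addrAC p (h *: v)); ring.
Qed.

Lemma schwarz f v w p :
  (forall q, derivable f q v) -> (forall q, derivable f q w) ->
  (forall q, derivable ('D_v f) q w) -> (forall q, derivable ('D_w f) q v) ->
  {for p, continuous ('D_w ('D_v f))} -> {for p, continuous ('D_v ('D_w f))} ->
  'D_w ('D_v f) p = 'D_v ('D_w f) p.
Proof.
move=> dfv dfw dfvw dfwv cvw cwv.
have far (x y z : R) : `|x - y| < `|x - z| / 2 -> `|y - z| < `|x - z| / 2 -> False.
  by have := ler_normD (x - y) (y - z); rewrite addrA subrK; lra.
set A := 'D_w ('D_v f) p; set B := 'D_v ('D_w f) p.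
have [//|AB] := eqVneq A B; exfalso.
pose e := `|A - B| / 2.
have e0 : 0 < e by rewrite divr_gt0 // normr_gt0 subr_eq0.
have /nbhs_ballP[r1 r10 near1] := @cvgr_dist_lt _ _ _ _ (nbhs_filter p) _ _ cvw _ e0.
have /nbhs_ballP[r2 r20 near2] := @cvgr_dist_lt _ _ _ _ (nbhs_filter p) _ _ cwv _ e0.
pose r := Num.min r1 r2.
have r0 : 0 < r by rewrite lt_min r10 r20.
have [h h0 hvw] : exists2 h : R, 0 < h & h * (`|v| + `|w|) < r.
  have vw1 : 0 < `|v| + `|w| + 1 by rewrite ltr_wpDl // addr_ge0.
  exists (r / (`|v| + `|w| + 1)); first by rewrite divr_gt0.
  by rewrite mulrAC ltr_pdivrMr // ltr_pM2l // ltrDl.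
have close v' w' t1 t2 : `|t1| <= `|h| -> `|t2| <= `|h| ->
    `|v'| + `|w'| = `|v| + `|w| -> ball p r (p + t1 *: v' + t2 *: w').
  move=> t1h t2h vw; rewrite -ball_normE /ball_ /= -addrA opprD addrA subrr add0r normrN.
  rewrite (le_lt_trans (ler_normD _ _)) // !normrZ.
  rewrite (gtr0_norm h0) in t1h t2h.
  have := normr_ge0 v'; have := normr_ge0 w'; nra.
have [t1 [t2 [t1h t2h E1]]] := second_difference_mvt p h dfv dfvw.
have [s1 [s2 [s1h s2h E2]]] := second_difference_mvt p h dfw dfwv.
have hh0 : h * h != 0 by rewrite mulf_neq0 ?lt0r_neq0.
have E : 'D_w ('D_v f) (p + t1 *: v + t2 *: w) = 'D_v ('D_w f) (p + s1 *: w + s2 *: v).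
  apply: (mulIf hh0); rewrite /= [LHS]mulrA [RHS]mulrA.
  apply: etrans (esym E1) (etrans _ E2).
  by rewrite (addrAC p (h *: v)); congr (_ + _); apply: addrAC.
have rr1 : r <= r1 by rewrite ge_min lexx.
have rr2 : r <= r2 by rewrite ge_min lexx orbT.
have n1 := near1 _ (le_ball rr1 (close _ _ _ _ t1h t2h erefl)).
have n2 := near2 _ (le_ball rr2 (close _ _ _ _ s1h s2h (addrC _ _))).
rewrite /= distrC -E in n2.
exact: far n1 n2.
Qed.

Definition line_invariant v f := forall p (s : R), f (p + s *: v) = f p.

Lemma line_invariantP f v :
  (forall p, derivable f p v) -> (forall p, 'D_v f p = 0) -> line_invariant v f.
Proof.
move=> df f'0 p s.
by rewrite (line_affine (fun s => df _) (fun s => f'0 _)) mul0r addr0.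
Qed.

Lemma derive_line_invariant f v p : line_invariant v f -> 'D_v f p = 0.
Proof. by move=> fv; apply: derive_line_cst. Qed.

Lemma line_invariant_derive f v w :
  line_invariant v f -> line_invariant v ('D_w f).
Proof.
move=> fv p s; have fv0 q : f (q + s *: v) = f q + 0 by rewrite fv addr0.
exact: derive_shift fv0.
Qed.

End DirectionalDerivatives.

Section Coordinates.
Variable R : realType.
Local Notation V := (V5 R).
Local Notation ex := (iv ix).
Local Notation ey := (iv iy).
Local Notation ez := (iv iz).
Local Notation et := (iv it).
Implicit Types (f : V -> R) (p q : V).

Lemma smooth_derivable f k p : smooth f -> derivable f p (ev R k).
Proof. by move=> sf; have [_ [df _]] := sf 1%N; apply: df. Qed.

Lemma smooth_pd f k : smooth f -> smooth (pd k f).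
Proof. by move=> sf n; have [_ [_ dsf]] := sf n.+1; apply: dsf. Qed.

Lemma smooth_continuous f : smooth f -> continuous f.
Proof. by move=> sf; apply: (sf 0%N). Qed.

Lemma smooth_pdC f j k p : smooth f -> pd k (pd j f) p = pd j (pd k f) p.
Proof.
move=> sf; apply: schwarz => [q|q|q|q||].
- exact: smooth_derivable.
- exact: smooth_derivable.
- exact/smooth_derivable/smooth_pd.
- exact/smooth_derivable/smooth_pd.
- exact/smooth_continuous/smooth_pd/smooth_pd.
- exact/smooth_continuous/smooth_pd/smooth_pd.
Qed.

Lemma coord_shift_u q (s : R) : (q + s *: ev R uu) 0 uu = q 0 uu + s.
Proof. by rewrite !mxE /= mulr1. Qed.

Lemma coord_shift_iv q (s : R) i : (q + s *: ev R (iv i)) 0 uu = q 0 uu.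
Proof. by rewrite !mxE /=; case: i => [[|[|[|[|]]]] ?] //=; rewrite mulr0 addr0. Qed.

Lemma pt_ev (x y z t u : R) : pt x y z t u =
  0 + x *: ev R ex + y *: ev R ey + z *: ev R ez + t *: ev R et + u *: ev R uu.
Proof.
apply/rowP => k; rewrite !mxE /=.
by case: k => [[|[|[|[|[|]]]]] ?] //=; rewrite !mulr0 !mulr1 ?add0r ?addr0.
Qed.

Lemma pt_coord q : q = pt (q 0 ex) (q 0 ey) (q 0 ez) (q 0 et) (q 0 uu).
Proof.
apply/rowP => k; rewrite mxE.
by case: k => [[|[|[|[|[|]]]]] ?] //=; congr (q 0 _); apply: val_inj.
Qed.

Lemma affine_of_pd_cst f (c0 c1 c2 c3 c4 : R) :
  (forall k q, derivable f q (ev R k)) ->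
  (forall q, pd ex f q = c0) -> (forall q, pd ey f q = c1) ->
  (forall q, pd ez f q = c2) -> (forall q, pd et f q = c3) ->
  (forall q, pd uu f q = c4) ->
  forall x y z t u : R,
    f (pt x y z t u) = f 0 + c0 * x + c1 * y + c2 * z + c3 * t + c4 * u.
Proof.
move=> df f0 f1 f2 f3 f4 x y z t u.
have line k c q s : (forall q, pd k f q = c) -> f (q + s *: ev R k) = f q + c * s.
  by move=> fc; apply: line_affine => s'; [apply: df | apply: fc].
by rewrite pt_ev (line _ _ _ _ f4) (line _ _ _ _ f3) (line _ _ _ _ f2)
   (line _ _ _ _ f1) (line _ _ _ _ f0); ring.
Qed.

Lemma smooth_line_invariant f k :
  smooth f -> (forall q, pd k f q = 0) -> line_invariant (ev R k) f.
Proof. by move=> sf; apply: line_invariantP => q; apply: smooth_derivable. Qed.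

Lemma line_invariant_pd f v k : line_invariant v f -> line_invariant v (pd k f).
Proof. exact: line_invariant_derive. Qed.

Lemma pd_line_invariant f k q : line_invariant (ev R k) f -> pd k f q = 0.
Proof. exact: derive_line_invariant. Qed.

Lemma pd_eq0 f k q : (forall q, f q = 0) -> pd k f q = 0.
Proof. exact: derive_eq0. Qed.

Lemma cst_of_pd_eq0 f : (forall k q, derivable f q (ev R k)) ->
  (forall q, pd ex f q = 0) -> (forall q, pd ey f q = 0) ->
  (forall q, pd ez f q = 0) -> (forall q, pd et f q = 0) ->
  (forall q, pd uu f q = 0) -> forall q, f q = f 0.
Proof.
move=> df f0 f1 f2 f3 f4 q; rewrite [in LHS](pt_coord q).
by rewrite (affine_of_pd_cst df f0 f1 f2 f3 f4) !mul0r !addr0.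
Qed.

Lemma pd_scale f g k q (c : R) : derivable g q (ev R k) ->
  (forall r, f r = c * g r) -> pd k f q = c * pd k g q.
Proof. by move=> dg fg; apply: derive_proportional => // h; rewrite !fg !subrr. Qed.

End Coordinates.

Section Jets.
Variable R : realType.

Lemma sum4 (F : 'I_4 -> R) : \sum_(k < 4) F k = F ix + F iy + F iz + F it.
Proof.
rewrite !big_ord_recl big_ord0 addr0 !addrA.
by congr (F _ + F _ + F _ + F _); apply: val_inj.
Qed.

Definition jet1 (ux uy uz ut : R) : 'I_4 -> R := nth 0 [:: ux; uy; uz; ut].

Definition jet2 (xx xy xz xt yy yz yt zz zt tt : R) : 'I_4 -> 'I_4 -> R :=
  fun i => nth 0 (nth [::] [:: [:: xx; xy; xz; xt]; [:: xy; yy; yz; yt];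
                               [:: xz; yz; zz; zt]; [:: xt; yt; zt; tt]] i).

Lemma jet1E ux uy uz ut : let J := jet1 ux uy uz ut in
  (J ix = ux) * (J iy = uy) * (J iz = uz) * (J it = ut).
Proof. by []. Qed.

Lemma jet2E xx xy xz xt yy yz yt zz zt tt :
  let J := jet2 xx xy xz xt yy yz yt zz zt tt in
  (J ix ix = xx) * (J ix iy = xy) * (J ix iz = xz) * (J ix it = xt) *
  (J iy ix = xy) * (J iy iy = yy) * (J iy iz = yz) * (J iy it = yt) *
  (J iz ix = xz) * (J iz iy = yz) * (J iz iz = zz) * (J iz it = zt) *
  (J it ix = xt) * (J it iy = yt) * (J it iz = zt) * (J it it = tt).
Proof. by []. Qed.

Lemma jet2C xx xy xz xt yy yz yt zz zt tt i j :
  jet2 xx xy xz xt yy yz yt zz zt tt i j = jet2 xx xy xz xt yy yz yt zz zt tt j i.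
Proof. by case: i => [[|[|[|[|i]]]] ?]; case: j => [[|[|[|[|j]]]] ?]. Qed.

Lemma pr1E xi phi u1 i (p : V5 R) : pr1 xi phi u1 i p = TD1 phi u1 i p -
  (u1 ix * TD1 (xi ix) u1 i p + u1 iy * TD1 (xi iy) u1 i p +
   u1 iz * TD1 (xi iz) u1 i p + u1 it * TD1 (xi it) u1 i p).
Proof. by rewrite /pr1 sum4. Qed.

Lemma pr2E xi phi u1 u2 i j (p : V5 R) :
  pr2 xi phi u1 u2 i j p = TD2 phi u1 u2 i j p -
  ((u1 ix * TD2 (xi ix) u1 u2 i j p + u2 i ix * TD1 (xi ix) u1 j p
    + u2 j ix * TD1 (xi ix) u1 i p) +
   (u1 iy * TD2 (xi iy) u1 u2 i j p + u2 i iy * TD1 (xi iy) u1 j p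
    + u2 j iy * TD1 (xi iy) u1 i p) +
   (u1 iz * TD2 (xi iz) u1 u2 i j p + u2 i iz * TD1 (xi iz) u1 j p
    + u2 j iz * TD1 (xi iz) u1 i p) +
   (u1 it * TD2 (xi it) u1 u2 i j p + u2 i it * TD1 (xi it) u1 j p
    + u2 j it * TD1 (xi it) u1 i p)).
Proof. by rewrite /pr2 sum4. Qed.

End Jets.

Section DeterminingEquations.
Variables (R : realType) (a : R) (xi : 'I_4 -> V5 R -> R) (phi : V5 R -> R).
Hypothesis sym : is_symmetry a xi phi.
Local Notation ex := (iv ix).
Local Notation ey := (iv iy).
Local Notation ez := (iv iz).
Local Notation et := (iv it).
Local Notation X := (xi ix).
Local Notation Y := (xi iy).
Local Notation Z := (xi iz).
Local Notation tau := (xi it).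
Implicit Types p : V5 R.

Lemma prZK_on_shell p (ux uy uz xx xy xz xt yy yz yt zz zt tt : R) :
  prZK a xi phi p (jet1 ux uy uz (- (a * p 0 uu * ux + xx + yy + zz)))
    (jet2 xx xy xz xt yy yz yt zz zt tt) = 0.
Proof. by apply: sym => [i j|]; [apply: jet2C | rewrite /zk !jet1E !jet2E; ring]. Qed.

(* Comparing the values of [prZK_on_shell] at the zero jet and at jets with
   one or two nonzero entries isolates the coefficient of one monomial. *)
Ltac coefficient p :=
  rewrite /prZK !pr1E !pr2E /TD1 /TD2 !jet1E !jet2E; generalize (p 0 uu) (phi p);
  repeat match goal with |- context [pd ?k ?f ?q] => generalize (pd k f q) end;
  intros; subst; lra.

Local Notation shell0 p := (prZK_on_shell p 0 0 0 0 0 0 0 0 0 0 0 0 0).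

Lemma tau_x0 p : pd ex tau p = 0.
Proof.
have := shell0 p; have := prZK_on_shell p 0 0 0 0 0 0 1 0 0 0 0 0 0.
coefficient p.
Qed.

Lemma tau_y0 p : pd ey tau p = 0.
Proof.
have := shell0 p; have := prZK_on_shell p 0 0 0 0 0 0 0 0 0 1 0 0 0.
coefficient p.
Qed.

Lemma tau_z0 p : pd ez tau p = 0.
Proof.
have := shell0 p; have := prZK_on_shell p 0 0 0 0 0 0 0 0 0 0 0 1 0.
coefficient p.
Qed.

Lemma tau_u0 p : pd uu tau p = 0.
Proof.
have := shell0 p; have := prZK_on_shell p 0 0 0 0 0 0 0 0 0 1 0 0 0.
have := prZK_on_shell p 0 1 0 0 0 0 0 0 0 0 0 0 0.
have := prZK_on_shell p 0 1 0 0 0 0 0 0 0 1 0 0 0.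
coefficient p.
Qed.

Lemma X_u0 p : pd uu X p = 0.
Proof.
have := shell0 p; have := prZK_on_shell p 0 0 0 0 1 0 0 0 0 0 0 0 0.
have := prZK_on_shell p 0 1 0 0 0 0 0 0 0 0 0 0 0.
have := prZK_on_shell p 0 1 0 0 1 0 0 0 0 0 0 0 0.
coefficient p.
Qed.

Lemma Y_u0 p : pd uu Y p = 0.
Proof.
have := shell0 p; have := prZK_on_shell p 0 0 0 0 0 0 0 0 1 0 0 0 0.
have := prZK_on_shell p 0 0 1 0 0 0 0 0 0 0 0 0 0.
have := prZK_on_shell p 0 0 1 0 0 0 0 0 1 0 0 0 0.
coefficient p.
Qed.

Lemma Z_u0 p : pd uu Z p = 0.
Proof.
have := shell0 p; have := prZK_on_shell p 0 0 0 0 0 0 0 0 1 0 0 0 0.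
have := prZK_on_shell p 0 1 0 0 0 0 0 0 0 0 0 0 0.
have := prZK_on_shell p 0 1 0 0 0 0 0 0 1 0 0 0 0.
coefficient p.
Qed.

Lemma XY_antisym p : pd ex Y p + pd ey X p = 0.
Proof.
have := shell0 p; have := prZK_on_shell p 0 0 0 0 1 0 0 0 0 0 0 0 0.
coefficient p.
Qed.

Lemma XZ_antisym p : pd ex Z p + pd ez X p = 0.
Proof.
have := shell0 p; have := prZK_on_shell p 0 0 0 0 0 1 0 0 0 0 0 0 0.
coefficient p.
Qed.

Lemma YZ_antisym p : pd ey Z p + pd ez Y p = 0.
Proof.
have := shell0 p; have := prZK_on_shell p 0 0 0 0 0 0 0 0 1 0 0 0 0.
coefficient p.
Qed.

Lemma tau_second_pd0 p :
  [/\ pd ex (pd ex tau) p = 0, pd ey (pd ey tau) p = 0 & pd ez (pd ez tau) p = 0].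
Proof. by split; apply: pd_eq0; [apply: tau_x0 | apply: tau_y0 | apply: tau_z0]. Qed.

Lemma dilation_X p : pd et tau p = 2 * pd ex X p.
Proof.
have := tau_x0 p; have := tau_u0 p; case: (tau_second_pd0 p).
have := shell0 p; have := prZK_on_shell p 0 0 0 1 0 0 0 0 0 0 0 0 0.
have := prZK_on_shell p 0 0 0 (-1) 0 0 0 0 0 0 0 0 0.
coefficient p.
Qed.

Lemma dilation_Y p : pd et tau p = 2 * pd ey Y p.
Proof.
have := tau_x0 p; have := tau_u0 p; case: (tau_second_pd0 p).
have := shell0 p; have := prZK_on_shell p 0 0 0 0 0 0 0 1 0 0 0 0 0.
have := prZK_on_shell p 0 0 0 0 0 0 0 (-1) 0 0 0 0 0.
coefficient p.
Qed.

Lemma dilation_Z p : pd et tau p = 2 * pd ez Z p.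
Proof.
have := tau_x0 p; have := tau_u0 p; case: (tau_second_pd0 p).
have := shell0 p; have := prZK_on_shell p 0 0 0 0 0 0 0 0 0 0 1 0 0.
have := prZK_on_shell p 0 0 0 0 0 0 0 0 0 0 (-1) 0 0.
coefficient p.
Qed.

Lemma coef_uy p :
  - pd et Y p - a * p 0 uu * pd ex Y p + pd uu (pd ey phi) p + pd ey (pd uu phi) p
  - (pd ex (pd ex Y) p + pd ey (pd ey Y) p + pd ez (pd ez Y) p) = 0.
Proof.
have := shell0 p; have := prZK_on_shell p 0 1 0 0 0 0 0 0 0 0 0 0 0.
have := prZK_on_shell p 0 (-1) 0 0 0 0 0 0 0 0 0 0 0.
have := prZK_on_shell p 0 2 0 0 0 0 0 0 0 0 0 0 0.
coefficient p.
Qed.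

Lemma coef_uz p :
  - pd et Z p - a * p 0 uu * pd ex Z p + pd uu (pd ez phi) p + pd ez (pd uu phi) p
  - (pd ex (pd ex Z) p + pd ey (pd ey Z) p + pd ez (pd ez Z) p) = 0.
Proof.
have := shell0 p; have := prZK_on_shell p 0 0 1 0 0 0 0 0 0 0 0 0 0.
have := prZK_on_shell p 0 0 (-1) 0 0 0 0 0 0 0 0 0 0.
have := prZK_on_shell p 0 0 2 0 0 0 0 0 0 0 0 0 0.
coefficient p.
Qed.

Lemma coef_uy2 p :
  pd uu (pd uu phi) p - pd uu (pd ey Y) p - pd ey (pd uu Y) p = 0.
Proof.
have := shell0 p; have := prZK_on_shell p 0 1 0 0 0 0 0 0 0 0 0 0 0.
have := prZK_on_shell p 0 (-1) 0 0 0 0 0 0 0 0 0 0 0.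
have := prZK_on_shell p 0 2 0 0 0 0 0 0 0 0 0 0 0.
coefficient p.
Qed.

Lemma coef_ux p :
  a * p 0 uu * pd et tau p - pd et X p + a * phi p - a * p 0 uu * pd ex X p
  + pd uu (pd ex phi) p + pd ex (pd uu phi) p
  - (pd ex (pd ex X) p + pd ey (pd ey X) p + pd ez (pd ez X) p) = 0.
Proof.
have := tau_x0 p; case: (tau_second_pd0 p).
have := shell0 p; have := prZK_on_shell p 1 0 0 0 0 0 0 0 0 0 0 0 0.
have := prZK_on_shell p (-1) 0 0 0 0 0 0 0 0 0 0 0 0.
have := prZK_on_shell p 2 0 0 0 0 0 0 0 0 0 0 0 0.
coefficient p.
Qed.

Lemma coef_1 p :
  pd et phi p + a * p 0 uu * pd ex phi p
  + (pd ex (pd ex phi) p + pd ey (pd ey phi) p + pd ez (pd ez phi) p) = 0.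
Proof. have := shell0 p; coefficient p. Qed.

End DeterminingEquations.

(* Abstracting the partial derivatives keeps [lra] from unfolding [derive]
   when it compares atoms. *)
Ltac lra_pd :=
  repeat match goal with H : _ = _ |- _ => revert H end;
  repeat match goal with |- context [pd ?k ?f ?q] => generalize (pd k f q) end;
  intros; subst; lra.

Section Integration.
Variables (R : realType) (a : R) (xi : 'I_4 -> V5 R -> R) (phi : V5 R -> R).
Hypotheses (a_gt0 : 0 < a) (xi_smooth : forall i, smooth (xi i))
  (phi_smooth : smooth phi) (sym : is_symmetry a xi phi).
Local Notation V := (V5 R).
Local Notation ex := (iv ix).
Local Notation ey := (iv iy).
Local Notation ez := (iv iz).
Local Notation et := (iv it).
Local Notation X := (xi ix).
Local Notation Y := (xi iy).
Local Notation Z := (xi iz).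
Local Notation tau := (xi it).
Local Notation T := (pd et tau).
Local Notation inv k f := (line_invariant (ev R k) f).
Implicit Types (q : V).

Let a_neq0 : a != 0. Proof. exact: lt0r_neq0. Qed.

Let xi_derivable : forall i k q, derivable (xi i) q (ev R k).
Proof. by move=> i k q; apply/smooth_derivable. Qed.

Let xi_pd_derivable : forall i j k q, derivable (pd j (xi i)) q (ev R k).
Proof. by move=> i j k q; apply/smooth_derivable/smooth_pd. Qed.

Lemma T_invariant : [/\ inv ex T, inv ey T, inv ez T & inv uu T].
Proof.
by split; apply/line_invariant_pd/smooth_line_invariant => //;
  [exact: tau_x0 sym | exact: tau_y0 sym | exact: tau_z0 sym | exact: tau_u0 sym].
Qed.

Lemma xi_invariant_u : [/\ inv uu X, inv uu Y & inv uu Z].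
Proof.
by split; apply: smooth_line_invariant => //;
  [exact: X_u0 sym | exact: Y_u0 sym | exact: Z_u0 sym].
Qed.

Lemma phi_u_invariant : inv uu (pd uu phi).
Proof.
apply: smooth_line_invariant; first exact: smooth_pd.
move=> q; have [_ Yu _] := xi_invariant_u; have := coef_uy2 sym q.
rewrite (pd_line_invariant _ (line_invariant_pd _ Yu)).
by rewrite (pd_eq0 _ _ (Y_u0 sym)) !subr0.
Qed.

(* In [coef_uy] at [q] and at [q] shifted by one in [u], only the term
   [a u (pd ex Y)] differs. *)
Lemma Y_x0 q : pd ex Y q = 0.
Proof.
have [_ Yu _] := xi_invariant_u.
have := coef_uy sym (q + 1 *: ev R uu); have := coef_uy sym q.
rewrite !(smooth_pdC ey uu _ phi_smooth) coord_shift_u !(line_invariant_pd _ Yu).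
rewrite !(line_invariant_pd _ (line_invariant_pd _ Yu)) (line_invariant_pd _ phi_u_invariant).
by move=> E1 E2; apply: (mulfI a_neq0); rewrite mulr0; lra_pd.
Qed.

Lemma Z_x0 q : pd ex Z q = 0.
Proof.
have [_ _ Zu] := xi_invariant_u.
have := coef_uz sym (q + 1 *: ev R uu); have := coef_uz sym q.
rewrite !(smooth_pdC ez uu _ phi_smooth) coord_shift_u !(line_invariant_pd _ Zu).
rewrite !(line_invariant_pd _ (line_invariant_pd _ Zu)) (line_invariant_pd _ phi_u_invariant).
by move=> E1 E2; apply: (mulfI a_neq0); rewrite mulr0; lra_pd.
Qed.

Lemma X_y0 q : pd ey X q = 0.
Proof. by have := XY_antisym sym q; rewrite Y_x0 add0r. Qed.

Lemma X_z0 q : pd ez X q = 0.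
Proof. by have := XZ_antisym sym q; rewrite Z_x0 add0r. Qed.

Lemma X_x q : pd ex X q = T q / 2.
Proof. by rewrite (dilation_X sym) mulrAC divff ?mul1r. Qed.

Lemma Y_y q : pd ey Y q = T q / 2.
Proof. by rewrite (dilation_Y sym) mulrAC divff ?mul1r. Qed.

Lemma Z_z q : pd ez Z q = T q / 2.
Proof. by rewrite (dilation_Z sym) mulrAC divff ?mul1r. Qed.

(* Along a [u]-line, the terms of [coef_ux] that vary are [a phi] and
   [a u (T - pd ex X)] = [a u T / 2]. *)
Lemma phi_affine_u q (s : R) : phi (q + s *: ev R uu) = phi q + (- T q / 2) * s.
Proof.
have [Xu _ _] := xi_invariant_u; have [_ _ _ Tu] := T_invariant.
have := coef_ux sym (q + s *: ev R uu); have := coef_ux sym q; have := dilation_X sym q.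
rewrite !(smooth_pdC ex uu _ phi_smooth) coord_shift_u Tu !(line_invariant_pd _ Xu).
rewrite !(line_invariant_pd _ (line_invariant_pd _ Xu)) (line_invariant_pd _ phi_u_invariant).
by move=> TX E1 E2; apply: (mulfI a_neq0); lra_pd.
Qed.

Lemma phi_u q : pd uu phi q = - T q / 2.
Proof. by apply: derive_line_affine => h; rewrite phi_affine_u. Qed.

Lemma phi_u_invariant_T k : inv k T -> inv k (pd uu phi).
Proof. by move=> Tk q s; rewrite !phi_u Tk. Qed.

Lemma Y_second_pd0 q :
  [/\ pd ex (pd ex Y) q = 0, pd ey (pd ey Y) q = 0 & pd ez (pd ez Y) q = 0].
Proof.
have [_ Ty _ _] := T_invariant.
have Y_z r : pd ez Y r = -1 * pd ey Z r by have := YZ_antisym sym r; lra_pd.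
split; first exact: pd_eq0 Y_x0.
  by apply: derive_line_cst => h; rewrite !Y_y Ty.
rewrite (pd_scale (@xi_pd_derivable _ _ _ _) Y_z) (smooth_pdC ey ez _ (xi_smooth iz)).
by rewrite (_ : pd ey (pd ez Z) q = 0) ?mulr0 //; apply: derive_line_cst => h; rewrite !Z_z Ty.
Qed.

Lemma Z_second_pd0 q :
  [/\ pd ex (pd ex Z) q = 0, pd ey (pd ey Z) q = 0 & pd ez (pd ez Z) q = 0].
Proof.
have [_ _ Tz _] := T_invariant.
have Z_y r : pd ey Z r = -1 * pd ez Y r by have := YZ_antisym sym r; lra_pd.
split; first exact: pd_eq0 Z_x0.
  rewrite (pd_scale (@xi_pd_derivable _ _ _ _) Z_y) (smooth_pdC ez ey _ (xi_smooth iy)).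
  by rewrite (_ : pd ez (pd ey Y) q = 0) ?mulr0 //; apply: derive_line_cst => h; rewrite !Y_y Tz.
by apply: derive_line_cst => h; rewrite !Z_z Tz.
Qed.

Lemma Y_t0 q : pd et Y q = 0.
Proof.
have [_ Ty _ _] := T_invariant; have [Yxx Yyy Yzz] := Y_second_pd0 q.
have := coef_uy sym q.
rewrite (smooth_pdC ey uu _ phi_smooth) (pd_line_invariant _ (phi_u_invariant_T Ty)).
by rewrite Y_x0 Yxx Yyy Yzz; lra_pd.
Qed.

Lemma Z_t0 q : pd et Z q = 0.
Proof.
have [_ _ Tz _] := T_invariant; have [Zxx Zyy Zzz] := Z_second_pd0 q.
have := coef_uz sym q.
rewrite (smooth_pdC ez uu _ phi_smooth) (pd_line_invariant _ (phi_u_invariant_T Tz)).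
by rewrite Z_x0 Zxx Zyy Zzz; lra_pd.
Qed.

Lemma T_cst q : T q = T 0.
Proof.
have [Tx Ty Tz Tu] := T_invariant.
apply: cst_of_pd_eq0 => [k r|r|r|r|r|r]; try exact: pd_line_invariant.
  exact/smooth_derivable/smooth_pd.
rewrite (pd_scale (@xi_pd_derivable _ _ _ _) (dilation_Y sym)).
by rewrite (smooth_pdC ey et _ (xi_smooth iy)) (pd_eq0 _ _ Y_t0) mulr0.
Qed.

Lemma T_invariant_t : inv et T.
Proof. by move=> q s; rewrite T_cst (T_cst q). Qed.

Lemma Z_y_cst q : pd ey Z q = pd ey Z 0.
Proof.
have [_ Ty _ _] := T_invariant.
apply: cst_of_pd_eq0 => [k r|r|r|r|r|r]; first exact: xi_pd_derivable.
- by rewrite (smooth_pdC ey ex _ (xi_smooth iz)) (pd_eq0 _ _ Z_x0).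
- by case: (Z_second_pd0 r).
- by rewrite (smooth_pdC ey ez _ (xi_smooth iz)); apply: derive_line_cst => h; rewrite !Z_z Ty.
- by rewrite (smooth_pdC ey et _ (xi_smooth iz)) (pd_eq0 _ _ Z_t0).
- by rewrite (smooth_pdC ey uu _ (xi_smooth iz)) (pd_eq0 _ _ (Z_u0 sym)).
Qed.

Lemma phi_formula q : a * phi q = pd et X q - a * q 0 uu * T q / 2.
Proof.
have [Tx _ _ _] := T_invariant.
have := coef_ux sym q.
rewrite (smooth_pdC ex uu _ phi_smooth) (pd_line_invariant _ (phi_u_invariant_T Tx)) X_x.
rewrite (pd_eq0 _ _ X_y0) (pd_eq0 _ _ X_z0) (_ : pd ex (pd ex X) q = 0); last first.
  by apply: derive_line_cst => h; rewrite !X_x Tx.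
by lra_pd.
Qed.

Lemma phi_pd i q : pd (iv i) phi q = a^-1 * pd (iv i) (pd et X) q.
Proof.
apply: derive_proportional => [|h]; first exact: xi_pd_derivable.
have phiE r : phi r - a^-1 * pd et X r = - (r 0 uu * T 0 / 2).
  apply: (mulfI a_neq0).
  by rewrite mulrBr mulrA mulfV // mul1r phi_formula (T_cst r); ring.
by rewrite !phiE coord_shift_iv.
Qed.

Lemma Xt_pd0 : [/\ forall q, pd ex (pd et X) q = 0, forall q, pd ey (pd et X) q = 0,
                   forall q, pd ez (pd et X) q = 0 & forall q, pd uu (pd et X) q = 0].
Proof.
split=> q; rewrite (smooth_pdC et _ _ (xi_smooth ix)).
- by apply: derive_line_cst => h; rewrite !X_x T_invariant_t.
- exact: pd_eq0 X_y0.
- exact: pd_eq0 X_z0.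
- exact: pd_eq0 (X_u0 sym).
Qed.

Lemma phi_pd0 : [/\ forall q, pd ex phi q = 0, forall q, pd ey phi q = 0
                  & forall q, pd ez phi q = 0].
Proof.
have [Xtx Xty Xtz _] := Xt_pd0.
by split=> q; rewrite phi_pd ?Xtx ?Xty ?Xtz mulr0.
Qed.

Lemma Xt_t0 q : pd et (pd et X) q = 0.
Proof.
have [phx phy phz] := phi_pd0.
have := coef_1 sym q.
rewrite (pd_eq0 _ _ phx) (pd_eq0 _ _ phy) (pd_eq0 _ _ phz) phx (phi_pd it).
by rewrite mulr0 !addr0 => /eqP; rewrite mulf_eq0 invr_eq0 (negbTE a_neq0) => /eqP.
Qed.

Lemma Xt_cst q : pd et X q = pd et X 0.
Proof.
have [Xtx Xty Xtz Xtu] := Xt_pd0.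
by apply: (cst_of_pd_eq0 _ Xtx Xty Xtz Xt_t0 Xtu) => k r; apply: xi_pd_derivable.
Qed.

Lemma symmetry_affine : exists c1 c2 c3 c4 c5 c6 c7 : R, forall x y z t u : R,
  [/\ X (pt x y z t u) = c1 * x / 2 + c5 * t + c6,
      Y (pt x y z t u) = c1 * y / 2 + c3 * z + c4,
      Z (pt x y z t u) = - (c3 * y) + c1 * z / 2 + c7,
      tau (pt x y z t u) = c1 * t + c2
    & phi (pt x y z t u) = - (c1 * u / 2) + c5 / a].
Proof.
exists (T 0), (tau 0), (- pd ey Z 0), (Y 0), (pd et X 0), (X 0), (Z 0) => x y z t u.
have halfT q : T q / 2 = T 0 / 2 by rewrite T_cst.
have Y_z q : pd ez Y q = - pd ey Z 0.
  by rewrite -(Z_y_cst q); have := YZ_antisym sym q; lra_pd.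
split.
- rewrite (affine_of_pd_cst (@xi_derivable ix) (fun q => etrans (X_x q) (halfT q))
    X_y0 X_z0 Xt_cst (X_u0 sym)); ring.
- rewrite (affine_of_pd_cst (@xi_derivable iy) Y_x0 (fun q => etrans (Y_y q) (halfT q))
    Y_z Y_t0 (Y_u0 sym)); ring.
- rewrite (affine_of_pd_cst (@xi_derivable iz) Z_x0 Z_y_cst
    (fun q => etrans (Z_z q) (halfT q)) Z_t0 (Z_u0 sym)); ring.
- rewrite (affine_of_pd_cst (@xi_derivable it) (tau_x0 sym) (tau_y0 sym) (tau_z0 sym)
    T_cst (tau_u0 sym)); ring.
- by apply: (mulfI a_neq0); rewrite phi_formula Xt_cst T_cst mxE /=; field.
Qed.

End Integration.

Section AffinePartials.
Variables (R : realType) (f : V5 R -> R) (b0 b1 b2 b3 b4 b5 : R).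
Hypothesis fE : forall q, f q = b0 * q 0 (iv ix) + b1 * q 0 (iv iy) + b2 * q 0 (iv iz)
                               + b3 * q 0 (iv it) + b4 * q 0 uu + b5.

Lemma pd_affine k q : pd k f q = nth 0 [:: b0; b1; b2; b3; b4] k.
Proof.
apply: derive_line_affine => h; rewrite !fE !mxE /=.
by case: k => [[|[|[|[|[|k]]]]] ?] //=; rewrite ?mulr0 ?mulr1 ?addr0; ring.
Qed.

Lemma TD1_affine u1 i q : TD1 f u1 i q = nth 0 [:: b0; b1; b2; b3] i + u1 i * b4.
Proof. by rewrite /TD1 !pd_affine; case: i => [[|[|[|[|i]]]] ?]. Qed.

Lemma TD2_affine u1 u2 i j q : TD2 f u1 u2 i j q = u2 i j * b4.
Proof.
have pd2 k l r : pd k (pd l f) r = 0 by apply: derive_line_cst => h; rewrite !pd_affine.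
by rewrite /TD2 !pd2 pd_affine /=; ring.
Qed.

End AffinePartials.

Section Converse.
Variables (R : realType) (a : R) (xi : 'I_4 -> V5 R -> R) (phi : V5 R -> R).
Variables c1 c2 c3 c4 c5 c6 c7 : R.
Hypothesis a_neq0 : a != 0.
Hypothesis xi_phiE : forall x y z t u : R,
  [/\ xi ix (pt x y z t u) = c1 * x / 2 + c5 * t + c6,
      xi iy (pt x y z t u) = c1 * y / 2 + c3 * z + c4,
      xi iz (pt x y z t u) = - (c3 * y) + c1 * z / 2 + c7,
      xi it (pt x y z t u) = c1 * t + c2
    & phi (pt x y z t u) = - (c1 * u / 2) + c5 / a].
Local Notation ex := (iv ix).
Local Notation ey := (iv iy).
Local Notation ez := (iv iz).
Local Notation et := (iv it).

Lemma prZK_affine p u1 u2 : (forall i j, u2 i j = u2 j i) ->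
  prZK a xi phi p u1 u2 = - (3 * c1) / 2 * zk a p u1 u2.
Proof.
move=> u2C.
have xiE (q : V5 R) := xi_phiE (q 0 ex) (q 0 ey) (q 0 ez) (q 0 et) (q 0 uu).
have XE q : xi ix q = c1 / 2 * q 0 ex + 0 * q 0 ey + 0 * q 0 ez + c5 * q 0 et
                      + 0 * q 0 uu + c6.
  by rewrite {1}(pt_coord q); case: (xiE q) => -> _ _ _ _; ring.
have YE q : xi iy q = 0 * q 0 ex + c1 / 2 * q 0 ey + c3 * q 0 ez + 0 * q 0 et
                      + 0 * q 0 uu + c4.
  by rewrite {1}(pt_coord q); case: (xiE q) => _ -> _ _ _; ring.
have ZE q : xi iz q = 0 * q 0 ex + - c3 * q 0 ey + c1 / 2 * q 0 ez + 0 * q 0 et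
                      + 0 * q 0 uu + c7.
  by rewrite {1}(pt_coord q); case: (xiE q) => _ _ -> _ _; ring.
have TE q : xi it q = 0 * q 0 ex + 0 * q 0 ey + 0 * q 0 ez + c1 * q 0 et
                      + 0 * q 0 uu + c2.
  by rewrite {1}(pt_coord q); case: (xiE q) => _ _ _ -> _; ring.
have PE q : phi q = 0 * q 0 ex + 0 * q 0 ey + 0 * q 0 ez + 0 * q 0 et
                    + - c1 / 2 * q 0 uu + c5 / a.
  by rewrite {1}(pt_coord q); case: (xiE q) => _ _ _ _ ->; ring.
rewrite /prZK /zk !pr1E !pr2E !(TD2_affine XE, TD2_affine YE, TD2_affine ZE).
rewrite !(TD2_affine TE, TD2_affine PE) !(TD1_affine XE, TD1_affine YE).
rewrite !(TD1_affine ZE, TD1_affine TE, TD1_affine PE) PE /= (u2C iz iy).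
by field.
Qed.

Lemma affine_symmetry : is_symmetry a xi phi.
Proof. by move=> p u1 u2 u2C Delta0; rewrite prZK_affine // Delta0 mulr0. Qed.

End Converse.

Theorem mainTheorem1 (R : realType) (a : R) (ha : 0 < a)
    (xi : 'I_4 -> V5 R -> R) (phi : V5 R -> R) :
  (forall i, smooth (xi i)) -> smooth phi ->
  (is_symmetry a xi phi <->
   exists c1 c2 c3 c4 c5 c6 c7 : R, forall x y z t u : R,
     [/\ xi ix (pt x y z t u) = c1 * x / 2 + c5 * t + c6,
         xi iy (pt x y z t u) = c1 * y / 2 + c3 * z + c4,
         xi iz (pt x y z t u) = - (c3 * y) + c1 * z / 2 + c7,
         xi it (pt x y z t u) = c1 * t + c2
       & phi (pt x y z t u) = - (c1 * u / 2) + c5 / a]).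
Proof.
move=> xi_smooth phi_smooth; split; first exact: symmetry_affine.
move=> [c1 [c2 [c3 [c4 [c5 [c6 [c7 xi_phiE]]]]]]].
exact: affine_symmetry (lt0r_neq0 ha) xi_phiE.
Qed.
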